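(* The predicate modal logic $\mathsf{QGrz}+\Box\exists x P(x)\to\Diamond\exists x\Box P(x)$ is not a modal companion of $\mathsf{IQC}$; i.e., there is a formula $\varphi$ of intuitionistic predicate logic with $\mathsf{IQC}\nvdash\varphi$ but $\mathsf{QGrz}+\Box\exists x P(x)\to\Diamond\exists x\Box P(x)\vdash\varphi^t$.
   Context: $\mathsf{IQC}$ is intuitionistic predicate calculus. $\mathsf{QS4}$ is the predicate extension of the modal logic $\mathsf{S4}$, and $\mathsf{QGrz}$ is $\mathsf{QS4}$ plus the Grzegorczyk axiom $\Box(\Box(p\to\Box p)\to p)\to p$ (with $p$ ranging over formulas). $\Diamond=\neg\Box\neg$. The Gödel translation $(-)^t$ of intuitionistic predicate formulas into modal predicate formulas is given by $\bot^t=\bot$, $P(\bar x)^t=\Box P(\bar x)$, $(\varphi\wedge\psi)^t=\varphi^t\wedge\psi^t$, $(\varphi\vee\psi)^t=\varphi^t\vee\psi^t$, $(\varphi\to\psi)^t=\Box(\neg\varphi^t\vee\psi^t)$, $(\forall x\varphi)^t=\Box\forall x\varphi^t$, $(\exists x\varphi)^t=\exists x\varphi^t$. A modal predicate logic $\mathsf{M}$ is a modal companion of $\mathsf{IQC}$ if for every formula $\varphi$, $\mathsf{IQC}\vdash\varphi$ iff $\mathsf{M}\vdash\varphi^t$. *)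

(* Individual variables are de Bruijn indices (nat); there are no function
   symbols, constants or equality. *)
From Stdlib Require Import List.
Import ListNotations.

Inductive iform : Type :=
| IBot : iform
| IPred : nat -> list nat -> iform
| IAnd : iform -> iform -> iform
| IOr : iform -> iform -> iform
| IImp : iform -> iform -> iform
| IAll : iform -> iform     (* binds de Bruijn index 0 *)
| IEx : iform -> iform.

Inductive mform : Type :=
| MBot : mform
| MPred : nat -> list nat -> mform
| MAnd : mform -> mform -> mform
| MOr : mform -> mform -> mform
| MImp : mform -> mform -> mform
| MBox : mform -> mform
| MAll : mform -> mform
| MEx : mform -> mform.

Definition MNeg (A : mform) : mform := MImp A MBot.
Definition MDia (A : mform) : mform := MNeg (MBox (MNeg A)).
Definition INeg (A : iform) : iform := IImp A IBot.

Definition up (s : nat -> nat) : nat -> nat :=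
  fun n => match n with 0 => 0 | S k => S (s k) end.

Fixpoint iren (s : nat -> nat) (A : iform) : iform :=
  match A with
  | IBot => IBot
  | IPred p xs => IPred p (map s xs)
  | IAnd B C => IAnd (iren s B) (iren s C)
  | IOr B C => IOr (iren s B) (iren s C)
  | IImp B C => IImp (iren s B) (iren s C)
  | IAll B => IAll (iren (up s) B)
  | IEx B => IEx (iren (up s) B)
  end.

Fixpoint mren (s : nat -> nat) (A : mform) : mform :=
  match A with
  | MBot => MBot
  | MPred p xs => MPred p (map s xs)
  | MAnd B C => MAnd (mren s B) (mren s C)
  | MOr B C => MOr (mren s B) (mren s C)
  | MImp B C => MImp (mren s B) (mren s C)
  | MBox B => MBox (mren s B)
  | MAll B => MAll (mren (up s) B)
  | MEx B => MEx (mren (up s) B)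
  end.

(* instantiate the variable 0 by the variable t (other free variables shift down) *)
Definition inst (t : nat) : nat -> nat :=
  fun n => match n with 0 => t | S k => k end.

Definition ishift (A : iform) : iform := iren S A.
Definition mshift (A : mform) : mform := mren S A.

Inductive IQC_prov : iform -> Prop :=
| i_K A B : IQC_prov (IImp A (IImp B A))
| i_S A B C : IQC_prov (IImp (IImp A (IImp B C)) (IImp (IImp A B) (IImp A C)))
| i_andE1 A B : IQC_prov (IImp (IAnd A B) A)
| i_andE2 A B : IQC_prov (IImp (IAnd A B) B)
| i_andI A B : IQC_prov (IImp A (IImp B (IAnd A B)))
| i_orI1 A B : IQC_prov (IImp A (IOr A B))
| i_orI2 A B : IQC_prov (IImp B (IOr A B))
| i_orE A B C : IQC_prov (IImp (IImp A C) (IImp (IImp B C) (IImp (IOr A B) C)))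
| i_efq A : IQC_prov (IImp IBot A)
| i_allE A t : IQC_prov (IImp (IAll A) (iren (inst t) A))
| i_exI A t : IQC_prov (IImp (iren (inst t) A) (IEx A))
| i_mp A B : IQC_prov (IImp A B) -> IQC_prov A -> IQC_prov B
| i_allR A B : IQC_prov (IImp (ishift B) A) -> IQC_prov (IImp B (IAll A))
| i_exR A B : IQC_prov (IImp A (ishift B)) -> IQC_prov (IImp (IEx A) B).

(* ---------- QS4 (classical predicate logic + S4, no Barcan formula) ---------- *)
Inductive QS4_axiom : mform -> Prop :=
| m_K A B : QS4_axiom (MImp A (MImp B A))
| m_S A B C : QS4_axiom (MImp (MImp A (MImp B C)) (MImp (MImp A B) (MImp A C)))
| m_andE1 A B : QS4_axiom (MImp (MAnd A B) A)
| m_andE2 A B : QS4_axiom (MImp (MAnd A B) B)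
| m_andI A B : QS4_axiom (MImp A (MImp B (MAnd A B)))
| m_orI1 A B : QS4_axiom (MImp A (MOr A B))
| m_orI2 A B : QS4_axiom (MImp B (MOr A B))
| m_orE A B C : QS4_axiom (MImp (MImp A C) (MImp (MImp B C) (MImp (MOr A B) C)))
| m_efq A : QS4_axiom (MImp MBot A)
| m_dne A : QS4_axiom (MImp (MNeg (MNeg A)) A)
| m_allE A t : QS4_axiom (MImp (MAll A) (mren (inst t) A))
| m_exI A t : QS4_axiom (MImp (mren (inst t) A) (MEx A))
| m_boxK A B : QS4_axiom (MImp (MBox (MImp A B)) (MImp (MBox A) (MBox B)))
| m_boxT A : QS4_axiom (MImp (MBox A) A)
| m_box4 A : QS4_axiom (MImp (MBox A) (MBox (MBox A))).

Definition Grz (A : mform) : mform :=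
  MImp (MBox (MImp (MBox (MImp A (MBox A))) A)) A.

(* the extra axiom  Box Ex x P(x) -> Dia Ex x Box P(x), as a schema
   (all substitution instances: P(x) replaced by any formula A, where x is
   de Bruijn index 0 and A may contain further free variables) *)
Definition extra_axiom (A : mform) : mform :=
  MImp (MBox (MEx A)) (MDia (MEx (MBox A))).

Inductive QGrzE_prov : mform -> Prop :=
| q_ax A : QS4_axiom A -> QGrzE_prov A
| q_grz A : QGrzE_prov (Grz A)
| q_extra A : QGrzE_prov (extra_axiom A)
| q_mp A B : QGrzE_prov (MImp A B) -> QGrzE_prov A -> QGrzE_prov B
| q_nec A : QGrzE_prov A -> QGrzE_prov (MBox A)
| q_allR A B : QGrzE_prov (MImp (mshift B) A) -> QGrzE_prov (MImp B (MAll A))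
| q_exR A B : QGrzE_prov (MImp A (mshift B)) -> QGrzE_prov (MImp (MEx A) B).

Fixpoint goedel (A : iform) : mform :=
  match A with
  | IBot => MBot
  | IPred p xs => MBox (MPred p xs)
  | IAnd B C => MAnd (goedel B) (goedel C)
  | IOr B C => MOr (goedel B) (goedel C)
  | IImp B C => MBox (MOr (MNeg (goedel B)) (goedel C))
  | IAll B => MBox (MAll (goedel B))
  | IEx B => MEx (goedel B)
  end.

(* The counterexample is the double negation of the drinker principle,
   ~~ Ex x (P x -> All y P y).  It fails in the intuitionistic Kripke model on
   (nat, <=) with constant domain nat where P(d) holds at w iff d < w: every
   individual eventually satisfies P while All y P y never holds, so no world
   forces the existential.  Its Goedel translation is nevertheless derivable:
   the classical drinker principle for Box P gives
   Box Ex x (~ Box P x \/ All y Box P y), the extra axiom turns this into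
   Dia Ex x Box (~ Box P x \/ All y Box P y), and in S4 a body
   Box (~ Box P x \/ C) implies Box (~ Box P x \/ Box C), which is the
   translation of P x -> All y P y. *)

From Stdlib Require Import List Lia.
Import ListNotations.

Definition scons {D : Type} (d : D) (rho : nat -> D) : nat -> D :=
  fun n => match n with 0 => d | S k => rho k end.

Section Kripke.

Variables (W Dom : Type) (R : W -> W -> Prop) (val : W -> nat -> list Dom -> Prop).
Hypothesis R_refl : forall w, R w w.
Hypothesis R_trans : forall u v w, R u v -> R v w -> R u w.
Hypothesis val_mono : forall w w' p ds, R w w' -> val w p ds -> val w' p ds.

Fixpoint forces (w : W) (rho : nat -> Dom) (A : iform) : Prop :=
  match A with
  | IBot => False
  | IPred p xs => val w p (map rho xs)
  | IAnd B C => forces w rho B /\ forces w rho C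
  | IOr B C => forces w rho B \/ forces w rho C
  | IImp B C => forall w', R w w' -> forces w' rho B -> forces w' rho C
  | IAll B => forall w', R w w' -> forall d, forces w' (scons d rho) B
  | IEx B => exists d, forces w (scons d rho) B
  end.

Lemma forces_mono A : forall rho w w', R w w' -> forces w rho A -> forces w' rho A.
Proof.
  induction A; cbn; intros rho w w' Hw H.
  - exact H.
  - eapply val_mono; eassumption.
  - destruct H; split; eauto.
  - destruct H; [left | right]; eauto.
  - intros w2 H2; apply H; eauto.
  - intros w2 H2; apply H; eauto.
  - destruct H as [d Hd]; exists d; eauto.
Qed.

Lemma forces_iren A : forall s rho rho' w, (forall n, rho' n = rho (s n)) ->
  (forces w rho (iren s A) <-> forces w rho' A).
Proof.
  induction A as [| p xs | B IHB C IHC | B IHB C IHC | B IHB C IHC | B IHB | B IHB];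
    intros s rho rho' w Hs; cbn.
  - reflexivity.
  - rewrite map_map, (map_ext _ _ (fun n => eq_sym (Hs n))). reflexivity.
  - rewrite (IHB s rho rho' w Hs), (IHC s rho rho' w Hs). reflexivity.
  - rewrite (IHB s rho rho' w Hs), (IHC s rho rho' w Hs). reflexivity.
  - split; intros H w' Hw HB; apply (IHC s rho rho' w' Hs); apply H; auto;
      apply (IHB s rho rho' w' Hs); exact HB.
  - assert (Hup : forall d n, scons d rho' n = scons d rho (up s n))
      by (intros d [|n]; cbn; auto).
    split; intros H w' Hw d; apply (IHB (up s) (scons d rho) (scons d rho') w' (Hup d));
      auto.
  - assert (Hup : forall d n, scons d rho' n = scons d rho (up s n))
      by (intros d [|n]; cbn; auto).
    split; intros [d H]; exists d; apply (IHB (up s) (scons d rho) (scons d rho') w (Hup d));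
      exact H.
Qed.

Lemma forces_inst A t w rho :
  forces w rho (iren (inst t) A) <-> forces w (scons (rho t) rho) A.
Proof. apply forces_iren. intros [|n]; reflexivity. Qed.

Lemma forces_ishift A d w rho : forces w (scons d rho) (ishift A) <-> forces w rho A.
Proof. apply forces_iren. reflexivity. Qed.

Theorem IQC_sound A : IQC_prov A -> forall w rho, forces w rho A.
Proof.
  induction 1; cbn; intros w rho.
  - intros w1 _ HA w2 H2 _. eapply forces_mono; eassumption.
  - intros w1 _ Habc w2 H2 Hab w3 H3 Ha.
    apply (Habc w3); eauto.
  - intros w1 _ [H _]; exact H.
  - intros w1 _ [_ H]; exact H.
  - intros w1 _ Ha w2 H2 Hb; split; [eapply forces_mono |]; eassumption.
  - intros w1 _ H; left; exact H.
  - intros w1 _ H; right; exact H.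
  - intros w1 _ Hac w2 H2 Hbc w3 H3 [Ha | Hb]; eauto.
  - intros w1 _ [].
  - intros w1 _ H. apply forces_inst, H, R_refl.
  - intros w1 _ H. exists (rho t). apply forces_inst, H.
  - apply (IHIQC_prov1 w rho w (R_refl w)), IHIQC_prov2.
  - intros w1 H1 HB w2 H2 d.
    apply (IHIQC_prov w2 (scons d rho) w2 (R_refl w2)), forces_ishift.
    eapply forces_mono; eassumption.
  - intros w1 _ [d Hd].
    apply (forces_ishift B d w1 rho), (IHIQC_prov w1 (scons d rho) w1 (R_refl w1)), Hd.
Qed.

End Kripke.

Definition drinker_body : iform := IImp (IPred 0 [0]) (IAll (IPred 0 [0])).

Definition dn_drinker : iform := INeg (INeg (IEx drinker_body)).

Definition growing_val (w _ : nat) (ds : list nat) : Prop := Forall (fun d => d < w) ds.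

Lemma growing_val_mono w w' p ds : w <= w' -> growing_val w p ds -> growing_val w' p ds.
Proof. intros Hw. apply Forall_impl. lia. Qed.

Lemma dn_drinker_unprovable : ~ IQC_prov dn_drinker.
Proof.
  intro H.
  apply (IQC_sound nat nat le growing_val le_n PeanoNat.Nat.le_trans growing_val_mono
           _ H 0 (fun _ => 0) 0 (le_n 0)).
  intros w _ [d Hd].
  set (w' := Nat.max w (S d)).
  assert (Hd' : growing_val w' 0 [d]) by (repeat constructor; lia).
  specialize (Hd w' ltac:(lia) Hd' w' (le_n w') w').
  apply Forall_inv in Hd. cbn in Hd. lia.
Qed.

Inductive derivable (G : list mform) : mform -> Prop :=
| dv_thm A : QGrzE_prov A -> derivable G A
| dv_hyp A : In A G -> derivable G A
| dv_mp A B : derivable G (MImp A B) -> derivable G A -> derivable G B.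

Ltac hyp := apply dv_hyp; cbn; tauto.

Lemma mimp_refl A : QGrzE_prov (MImp A A).
Proof.
  eapply q_mp; [eapply q_mp; [apply q_ax, (m_S A (MImp A A) A) | apply q_ax, m_K] |].
  apply q_ax, (m_K A A).
Qed.

Lemma deduction G A B : derivable (A :: G) B -> derivable G (MImp A B).
Proof.
  remember (A :: G) as G' eqn:HG.
  induction 1 as [C HC | C HC | C D _ IHimp _ IHarg]; subst.
  - apply dv_thm. eapply q_mp; [apply q_ax, m_K | assumption].
  - destruct HC as [<- | HC].
    + apply dv_thm, mimp_refl.
    + eapply dv_mp; [apply dv_thm, q_ax, m_K | apply dv_hyp, HC].
  - eapply dv_mp; [eapply dv_mp; [apply dv_thm, q_ax, m_S | exact IHimp] | exact IHarg].
Qed.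

Lemma derivable_nil A : derivable [] A -> QGrzE_prov A.
Proof. induction 1 as [| A [] | ]; eauto using q_mp. Qed.

Lemma imp_of_derivable A B : derivable [A] B -> QGrzE_prov (MImp A B).
Proof. intro H. apply derivable_nil, deduction, H. Qed.

Lemma dv_app G A B : QGrzE_prov (MImp A B) -> derivable G A -> derivable G B.
Proof. intro H. apply dv_mp, dv_thm, H. Qed.

Lemma dv_by_contra G A : derivable (MNeg A :: G) MBot -> derivable G A.
Proof. intro H. eapply dv_app; [apply q_ax, m_dne | apply deduction, H]. Qed.

Lemma box_mono A B : QGrzE_prov (MImp A B) -> QGrzE_prov (MImp (MBox A) (MBox B)).
Proof. intro H. eapply q_mp; [apply q_ax, m_boxK | apply q_nec, H]. Qed.

Lemma contrapose A B : QGrzE_prov (MImp A B) -> QGrzE_prov (MImp (MNeg B) (MNeg A)).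
Proof.
  intro H. apply imp_of_derivable, deduction.
  eapply dv_mp; [hyp | eapply dv_app; [exact H | hyp]].
Qed.

Lemma dia_mono A B : QGrzE_prov (MImp A B) -> QGrzE_prov (MImp (MDia A) (MDia B)).
Proof. intro H. apply contrapose, box_mono, contrapose, H. Qed.

Lemma box_neg_box_or A B :
  QGrzE_prov (MImp (MBox (MOr (MNeg (MBox A)) B)) (MBox (MOr (MNeg (MBox A)) (MBox B)))).
Proof.
  set (X := MOr (MNeg (MBox A)) B). set (Y := MOr (MNeg (MBox A)) (MBox B)).
  assert (Hcase : QGrzE_prov (MImp X (MImp (MBox A) B))).
  { eapply q_mp; [eapply q_mp; [apply q_ax, m_orE |] | apply q_ax, m_K].
    apply imp_of_derivable, deduction.
    eapply dv_app; [apply q_ax, m_efq | apply (dv_mp _ (MBox A)); hyp]. }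
  assert (Hunboxed : QGrzE_prov (MImp (MBox X) Y)).
  { apply imp_of_derivable, dv_by_contra.
    assert (HboxA : derivable [MNeg Y; MBox X] (MBox A)).
    { apply dv_by_contra, (dv_mp _ Y); [hyp | eapply dv_app; [apply q_ax, m_orI1 | hyp]]. }
    apply (dv_mp _ Y); [hyp |]. eapply dv_app; [apply q_ax, m_orI2 |].
    (* Axiom 4 lifts [Box A] to [Box Box A], which [Box (Box A -> B)] turns into [Box B]. *)
    apply (dv_mp _ (MBox (MBox A))).
    - eapply dv_app; [apply q_ax, m_boxK |].
      eapply dv_app; [apply box_mono, Hcase | hyp].
    - eapply dv_app; [apply q_ax, m_box4 | exact HboxA]. }
  apply imp_of_derivable.
  eapply dv_app; [apply box_mono, Hunboxed | eapply dv_app; [apply q_ax, m_box4 | hyp]].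
Qed.

(* A formula whose only free variable is [0], i.e. a predicate [A(x)]. *)
Definition unary (A : mform) : Prop := forall s, s 0 = 0 -> mren s A = A.

Lemma mshift_ex_unary A : unary A -> mshift (MEx A) = MEx A.
Proof. intro HA. unfold mshift; cbn. rewrite HA; reflexivity. Qed.

Lemma ex_intro_unary A : unary A -> QGrzE_prov (MImp A (MEx A)).
Proof. intro HA. pose proof (q_ax _ (m_exI A 0)) as H. rewrite HA in H; auto. Qed.

Lemma ex_mono A B : unary B ->
  QGrzE_prov (MImp A B) -> QGrzE_prov (MImp (MEx A) (MEx B)).
Proof.
  intros HB H. apply q_exR. rewrite mshift_ex_unary by exact HB.
  apply imp_of_derivable.
  eapply dv_app; [apply ex_intro_unary, HB | eapply dv_app; [exact H | hyp]].
Qed.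

Lemma drinker A : unary A -> QGrzE_prov (MEx (MOr (MNeg A) (MAll A))).
Proof.
  intro HA. set (D := MOr (MNeg A) (MAll A)).
  assert (HD : unary D).
  { intros s Hs. unfold D; cbn. rewrite !HA; auto. }
  assert (Hall : QGrzE_prov (MImp (MNeg (MEx D)) (MAll A))).
  { apply q_allR. change (mshift (MNeg (MEx D))) with (MNeg (mshift (MEx D))).
    rewrite mshift_ex_unary by exact HD.
    apply imp_of_derivable, dv_by_contra, (dv_mp _ (MEx D)); [hyp |].
    eapply dv_app; [apply ex_intro_unary, HD | eapply dv_app; [apply q_ax, m_orI1 | hyp]]. }
  apply derivable_nil, dv_by_contra, (dv_mp _ (MEx D)); [hyp |].
  eapply dv_app; [apply ex_intro_unary, HD | eapply dv_app; [apply q_ax, m_orI2 |]].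
  eapply dv_app; [exact Hall | hyp].
Qed.

Lemma goedel_dneg_of_dia A :
  QGrzE_prov (MDia (goedel A)) -> QGrzE_prov (goedel (INeg (INeg A))).
Proof.
  intro H. cbn. apply q_nec. eapply q_mp; [apply q_ax, m_orI1 |].
  eapply q_mp; [apply contrapose, box_mono | exact H].
  eapply q_mp; [eapply q_mp; [apply q_ax, m_orE | apply mimp_refl] | apply q_ax, m_efq].
Qed.

Lemma unary_box_pred : unary (MBox (MPred 0 [0])).
Proof. intros s Hs. cbn. rewrite Hs. reflexivity. Qed.

Lemma unary_goedel_drinker_body : unary (goedel drinker_body).
Proof. intros s Hs. cbn. rewrite Hs. reflexivity. Qed.

Lemma dia_goedel_ex_drinker_body : QGrzE_prov (MDia (MEx (goedel drinker_body))).
Proof.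
  set (D := MOr (MNeg (MBox (MPred 0 [0]))) (MAll (MBox (MPred 0 [0])))).
  assert (Hdia : QGrzE_prov (MDia (MEx (MBox D)))).
  { eapply q_mp; [apply q_extra | apply q_nec, drinker, unary_box_pred]. }
  eapply q_mp; [apply dia_mono | exact Hdia].
  apply ex_mono; [apply unary_goedel_drinker_body | apply box_neg_box_or].
Qed.

Theorem theorem5p12 :
  exists phi : iform, ~ IQC_prov phi /\ QGrzE_prov (goedel phi).
Proof.
  exists dn_drinker. split.
  - exact dn_drinker_unprovable.
  - apply goedel_dneg_of_dia, dia_goedel_ex_drinker_body.
Qed.
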